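(* Let $N$ be a sub-sound tWF net, $M$ a sub-sound tWF net whose node set is disjoint from that of $N$, and $t$ a transition of $N$. Then the tWF net $N\otimes_t M$ is sub-sound.
   Context: Petri nets and markings. A Petri net is a triple $(P,T,F)$ with $P$ a finite set of places, $T$ a finite set of transitions, $P\cap T=\emptyset$, and $F\subseteq (P\times T)\cup(T\times P)$. For a node $x$, $\bullet x=\{y\mid (y,x)\in F\}$, $x\bullet=\{y\mid (x,y)\in F\}$. A marking is a multiset over $P$ (a function $P\to\mathbb N$); sets of places are identified with bags of multiplicity one, $+,-,\le$ are pointwise, and $k.m$ is the sum of $k$ copies of $m$. Transition $t$ is enabled at $m$ iff $\bullet t\le m$, firing gives $m-\bullet t+t\bullet$, and $m\xrightarrow{*}m'$ denotes reachability by a finite (possibly empty) firing sequence. Workflow nets. A pWF net is $(P,T,F,I,O)$ with $(P,T,F)$ a Petri net, $I,O\subseteq P$ non-empty, every node reachable by a directed path from some node of $I$, and some node of $O$ reachable from every node. A tWF net is the same with $I,O$ non-empty subsets of $T$. Input nodes may have incoming edges and output nodes outgoing edges. The place-completion $\mathrm{pc}(N)$ of a tWF net $N=(P,T,F,I,O)$ is obtained by adding two fresh places $p_i,p_o$ with edges $(p_i,t)$ for all $t\in I$ and $(t,p_o)$ for all $t\in O$, and taking input set $\{p_i\}$ and output set $\{p_o\}$. Sub-soundness. A pWF net is sub-sound if for all integers $k\ge k'\ge 0$ and every marking $m'$: if $k.I\xrightarrow{*}m'+k'.O$ then $m'\xrightarrow{*}(k-k').O$. A tWF net is sub-sound iff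 its place-completion is. Transition substitution. For a WF net $N=(P,T,F,I,O)$ and a tWF net $M=(P',T',F',I',O')$ with disjoint node sets and $t\in T$, $N\otimes_t M$ is obtained from $N$ by deleting $t$ and all edges incident to $t$, adding all nodes and edges of $M$, adding an edge $(q,t')$ for each $q\in\bullet_N t$ and $t'\in I'$, and an edge $(t',q)$ for each $t'\in O'$ and $q\in t\bullet_N$; its input set is $(I\setminus\{t\})\cup I'$ if $t\in I$ and $I$ otherwise, and its output set is $(O\setminus\{t\})\cup O'$ if $t\in O$ and $O$ otherwise. *)

(* Nodes of nets are natural numbers, so that
   node sets of different nets live in a common universe and disjointness
   is a genuine hypothesis; fresh nodes are available for place-completion. *)
From mathcomp Require Import all_boot.
Set Implicit Arguments. Unset Strict Implicit. Unset Printing Implicit Defensive.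

Record pnet := PNet { places : seq nat; trans : seq nat; flow : seq (nat * nat) }.

Definition nodes (N : pnet) : seq nat := places N ++ trans N.

Definition is_net (N : pnet) : Prop :=
  (forall x, x \in places N -> x \notin trans N) /\
  (forall e, e \in flow N ->
     (e.1 \in places N /\ e.2 \in trans N) \/ (e.1 \in trans N /\ e.2 \in places N)).

(* Markings: multisets over places, as functions nat -> nat
   (we additionally ask support in P where a marking is quantified). *)
Definition marking := nat -> nat.

Definition setb (s : seq nat) : marking := fun p => nat_of_bool (p \in s).
Definition mscale (k : nat) (m : marking) : marking := fun p => k * m p.
Definition madd (m1 m2 : marking) : marking := fun p => m1 p + m2 p.
Definition supported (N : pnet) (m : marking) : Prop :=
  forall p, p \notin places N -> m p = 0.

Definition preb (N : pnet) (t : nat) : marking := fun p => nat_of_bool ((p, t) \in flow N).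
Definition postb (N : pnet) (t : nat) : marking := fun p => nat_of_bool ((t, p) \in flow N).

Definition enabled (N : pnet) (m : marking) (t : nat) : Prop :=
  t \in trans N /\ forall p, preb N t p <= m p.

Definition fire (N : pnet) (m : marking) (t : nat) : marking :=
  fun p => m p - preb N t p + postb N t p.

Inductive reach (N : pnet) : marking -> marking -> Prop :=
| reach_nil m m' : (forall p, m p = m' p) -> reach N m m'
| reach_cons m t m' : enabled N m t -> reach N (fire N m t) m' -> reach N m m'.

Record wfnet := WFNet { wnet :> pnet; inp : seq nat; outp : seq nat }.

Definition edge (N : pnet) (x y : nat) : Prop := (x, y) \in flow N.
Inductive path_conn (N : pnet) : nat -> nat -> Prop :=
| pc_refl x : path_conn N x x
| pc_step x y z : edge N x y -> path_conn N y z -> path_conn N x z.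

Definition wf_conn (N : wfnet) : Prop :=
  (forall x, x \in nodes N -> exists2 i, i \in inp N & path_conn N i x) /\
  (forall x, x \in nodes N -> exists2 o, o \in outp N & path_conn N x o).

Definition is_pWF (N : wfnet) : Prop :=
  is_net N /\ inp N != [::] /\ outp N != [::] /\
  {subset inp N <= places N} /\ {subset outp N <= places N} /\ wf_conn N.

Definition is_tWF (N : wfnet) : Prop :=
  is_net N /\ inp N != [::] /\ outp N != [::] /\
  {subset inp N <= trans N} /\ {subset outp N <= trans N} /\ wf_conn N.

Definition subsound_p (N : wfnet) : Prop :=
  forall (k k' : nat) (m' : marking), k' <= k -> supported N m' ->
    reach N (mscale k (setb (inp N))) (madd m' (mscale k' (setb (outp N)))) ->
    reach N m' (mscale (k - k') (setb (outp N))).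

Definition maxnode (N : pnet) : nat := foldr maxn 0 (nodes N).

Definition pc (N : wfnet) : wfnet :=
  let p_i := (maxnode N).+1 in
  let p_o := (maxnode N).+2 in
  WFNet (PNet (p_i :: p_o :: places N) (trans N)
              (flow N ++ [seq (p_i, t) | t <- inp N] ++ [seq (t, p_o) | t <- outp N]))
        [:: p_i] [:: p_o].

Definition subsound_t (N : wfnet) : Prop := subsound_p (pc N).

Definition preset (N : pnet) (t : nat) : seq nat := [seq e.1 | e <- flow N & e.2 == t].
Definition postset (N : pnet) (t : nat) : seq nat := [seq e.2 | e <- flow N & e.1 == t].

Definition subst (N : wfnet) (t : nat) (M : wfnet) : wfnet :=
  WFNet
    (PNet (places N ++ places M)
          ([seq x <- trans N | x != t] ++ trans M)
          ([seq e <- flow N | (e.1 != t) && (e.2 != t)] ++ flow M ++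
           [seq (q, t') | q <- preset N t, t' <- inp M] ++
           [seq (t', q) | t' <- outp M, q <- postset N t]))
    (if t \in inp N then [seq x <- inp N | x != t] ++ inp M else inp N)
    (if t \in outp N then [seq x <- outp N | x != t] ++ outp M else outp N).

Definition disjoint_nodes (N M : pnet) : Prop :=
  forall x, x \in nodes N -> x \notin nodes M.

From mathcomp Require Import all_boot zify.
Set Implicit Arguments. Unset Strict Implicit. Unset Printing Implicit Defensive.

(* Let S = N (x)_t M.  The proof compares runs of pc(S) with runs of pc(N)
   and pc(M) through two simulations.
   - Lifting (liftM, liftN): a run of pc(M) lifts to pc(S) in any context, a
     token on the input (output) place of pc(M) standing for the preset
     (postset) of t; a run of pc(N) lifts to pc(S), each firing of t being
     replaced by a complete run of M, which exists since M is sub-sound.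
   - Projection (decomposes_reach): every marking of pc(S) reached from k
     input tokens splits into a marking of pc(N) reached from k tokens, where
     every started run of M counts as a firing of t, and a marking of pc(M)
     reached by starting these runs.
   Given k.i -->* m' + k'.o in pc(S), we project, complete the pending runs
   of M in S (sub-soundness of M, lifted), and complete the resulting N-view
   (sub-soundness of N, lifted).  Both completions use the fact that a
   sub-sound net never delivers more output tokens than it was given input
   tokens (pc_output_bounded). *)

Section Reachability.
Variable P : pnet.

Lemma reach_ext m1 m2 n1 n2 :
  reach P m1 m2 -> m1 =1 n1 -> m2 =1 n2 -> reach P n1 n2.
Proof.
move=> H; elim: H n1 n2 => [m m' E|m u m' [Hu Hen] _ IH] n1 n2 E1 E2.
  by apply: reach_nil => p; rewrite -E1 -E2.
apply: (@reach_cons _ _ u); first by split=> // p; rewrite -E1.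
by apply: IH E2 => p; rewrite /fire E1.
Qed.

Lemma reach_step m u : enabled P m u -> reach P m (fire P m u).
Proof. by move=> Hen; apply: reach_cons Hen _; apply: reach_nil. Qed.

Lemma reach_trans m1 m2 m3 : reach P m1 m2 -> reach P m2 m3 -> reach P m1 m3.
Proof.
elim=> [m m' E|m u m' Hen _ IH] H; last exact: reach_cons Hen (IH H).
by apply: reach_ext H _ (fun _ => erefl) => p; rewrite E.
Qed.

Lemma reach_madd m1 m2 x : reach P m1 m2 -> reach P (madd m1 x) (madd m2 x).
Proof.
elim=> [m m' E|m u m' [Hu Hen] _ IH].
  by apply: reach_nil => p; rewrite /madd E.
apply: (@reach_cons _ _ u); first by split=> // p; rewrite /madd; have := Hen p; lia.
apply: reach_ext IH _ (fun _ => erefl) => p.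
by rewrite /madd /fire; have := Hen p; lia.
Qed.

Definition flow_within_places : Prop := forall u p,
  u \in trans P -> p \notin places P -> preb P u p = 0 /\ postb P u p = 0.

Lemma reach_supported m m' :
  flow_within_places -> supported P m -> reach P m m' -> supported P m'.
Proof.
move=> W Hs H; elim: H Hs => [m0 m1 E|m0 u m1 [Hu Hen] _ IH] Hs.
  by move=> p Hp; rewrite -E Hs.
by apply: IH => p Hp; rewrite /fire Hs //; have [-> ->] := W u p Hu Hp.
Qed.

Lemma reach_unconsumed_mono o m m' :
  (forall u, u \in trans P -> preb P u o = 0) -> reach P m m' -> m o <= m' o.
Proof.
move=> Ho; elim=> [m0 m1 E|m0 u m1 [Hu Hen] _ IH]; first by rewrite E.
by apply: leq_trans IH; rewrite /fire Ho // subn0 leq_addr.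
Qed.

End Reachability.

Lemma setb1 x p : setb [:: x] p = (p == x).
Proof. by rewrite /setb in_cons in_nil orbF. Qed.

Lemma mem_map_pairl (a x y : nat) (s : seq nat) :
  ((x, y) \in [seq (a, z) | z <- s]) = (x == a) && (y \in s).
Proof.
elim: s => [|z s IH] /=; first by rewrite andbF.
by rewrite in_cons IH xpair_eqE; case: (x == a).
Qed.

Lemma mem_map_pairr (b x y : nat) (s : seq nat) :
  ((x, y) \in [seq (z, b) | z <- s]) = (x \in s) && (y == b).
Proof.
elim: s => [|z s IH] //=.
by rewrite in_cons IH xpair_eqE andb_orl.
Qed.

Lemma mem_allpairs_pair (x y : nat) (s1 s2 : seq nat) :
  ((x, y) \in [seq (a, b) | a <- s1, b <- s2]) = (x \in s1) && (y \in s2).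
Proof.
apply/allpairsP/andP => [[[a b] /= [H1 H2 [-> ->]]]|[H1 H2]] //.
by exists (x, y).
Qed.

Lemma mem_preset (R : pnet) x t : (x \in preset R t) = ((x, t) \in flow R).
Proof.
apply/mapP/idP => [[[a b]]|H].
  by rewrite mem_filter /= => /andP [/eqP -> H] ->.
by exists (x, t) => //; rewrite mem_filter eqxx.
Qed.

Lemma mem_postset (R : pnet) x t : (x \in postset R t) = ((t, x) \in flow R).
Proof.
apply/mapP/idP => [[[a b]]|H].
  by rewrite mem_filter /= => /andP [/eqP -> H] ->.
by exists (t, x) => //; rewrite mem_filter eqxx.
Qed.

Lemma places_nodes (R : pnet) x : x \in places R -> x \in nodes R.
Proof. by rewrite /nodes mem_cat => ->. Qed.

Lemma trans_nodes (R : pnet) x : x \in trans R -> x \in nodes R.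
Proof. by rewrite /nodes mem_cat => ->; rewrite orbT. Qed.

Section NetShape.
Variable R : pnet.
Hypothesis netR : is_net R.

Lemma place_not_trans x : x \in places R -> x \in trans R -> False.
Proof. by case: netR => H _ /H /negbTE ->. Qed.

Lemma flow_src_node x y : (x, y) \in flow R -> x \in nodes R.
Proof.
by case: netR => _ H /H [[H1 _]|[H1 _]]; [apply: places_nodes|apply: trans_nodes].
Qed.

Lemma flow_tgt_node x y : (x, y) \in flow R -> y \in nodes R.
Proof.
by case: netR => _ H /H [[_ H1]|[_ H1]]; [apply: trans_nodes|apply: places_nodes].
Qed.

Lemma flow_pre_place x u : (x, u) \in flow R -> u \in trans R -> x \in places R.
Proof. by case: netR => _ H /H [[]|[_ /place_not_trans]]. Qed.

Lemma flow_post_place u x : (u, x) \in flow R -> u \in trans R -> x \in places R.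
Proof. by case: netR => _ H /H [[/place_not_trans H1 _ /H1]|[]]. Qed.

Lemma flow_pre_notin x u : u \in trans R -> x \notin places R -> ((x, u) \in flow R) = false.
Proof. by move=> Hu Hx; apply/negbTE/negP => /flow_pre_place /(_ Hu); apply/negP. Qed.

Lemma flow_post_notin u x : u \in trans R -> x \notin places R -> ((u, x) \in flow R) = false.
Proof. by move=> Hu Hx; apply/negbTE/negP => /flow_post_place /(_ Hu); apply/negP. Qed.

End NetShape.

Notation pc_in R := (maxnode R).+1.
Notation pc_out R := (maxnode R).+2.

Lemma maxnode_ge (R : pnet) x : x \in nodes R -> x <= maxnode R.
Proof.
rewrite /maxnode; elim: (nodes R) => [|y s IH] //=.
rewrite in_cons => /orP [/eqP ->|/IH H]; first exact: leq_maxl.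
exact: leq_trans H (leq_maxr _ _).
Qed.

Lemma node_fresh (R : pnet) x :
  x \in nodes R -> (x == pc_in R) = false /\ (x == pc_out R) = false.
Proof. by move/maxnode_ge => H; split; apply/eqP; lia. Qed.

Lemma pc_in_out (R : pnet) : (pc_in R == pc_out R) = false.
Proof. by apply/eqP; lia. Qed.

Lemma pc_out_in (R : pnet) : (pc_out R == pc_in R) = false.
Proof. by apply/eqP; lia. Qed.

Lemma pc_in_notin (R : pnet) : pc_in R \notin places R.
Proof. by apply/negP => /places_nodes /node_fresh []; rewrite eqxx. Qed.

Lemma pc_out_notin (R : pnet) : pc_out R \notin places R.
Proof. by apply/negP => /places_nodes /node_fresh [_]; rewrite eqxx. Qed.

Lemma preb_pc (R : wfnet) u p : u \in trans R -> preb (pc R) u p =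
  nat_of_bool (((p, u) \in flow R) || (p == pc_in R) && (u \in inp R)).
Proof.
move=> /trans_nodes /node_fresh [_ Hu].
by rewrite /preb /pc /= !mem_cat mem_map_pairl mem_map_pairr Hu andbF orbF.
Qed.

Lemma postb_pc (R : wfnet) u p : u \in trans R -> postb (pc R) u p =
  nat_of_bool (((u, p) \in flow R) || (p == pc_out R) && (u \in outp R)).
Proof.
move=> /trans_nodes /node_fresh [Hu _].
by rewrite /postb /pc /= !mem_cat mem_map_pairl mem_map_pairr Hu /= [(u \in _) && _]andbC.
Qed.

Lemma supported_pc_in (R : wfnet) s : supported (pc R) (mscale s (setb [:: pc_in R])).
Proof.
move=> p; rewrite /mscale setb1 /= !in_cons negb_or => /andP [/negbTE -> _].
by rewrite muln0.
Qed.

Section CompletedTWF.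
Variable R : wfnet.
Hypothesis HR : is_tWF R.

Lemma preb_pc_outside u p : u \in trans R -> p \notin places R ->
  preb (pc R) u p = (p == pc_in R) && (u \in inp R).
Proof. by move=> Hu Hp; rewrite preb_pc // flow_pre_notin //; case: HR. Qed.

Lemma postb_pc_outside u p : u \in trans R -> p \notin places R ->
  postb (pc R) u p = (p == pc_out R) && (u \in outp R).
Proof. by move=> Hu Hp; rewrite postb_pc // flow_post_notin //; case: HR. Qed.

Lemma flow_within_pc : flow_within_places (pc R).
Proof.
move=> u p Hu; rewrite /= !in_cons !negb_or => /andP [/negbTE Ha /andP [/negbTE Hb Hp]].
by rewrite preb_pc_outside // postb_pc_outside // Ha Hb.
Qed.

Lemma pc_out_unconsumed u : u \in trans R -> preb (pc R) u (pc_out R) = 0.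
Proof. by move=> Hu; rewrite preb_pc_outside ?pc_out_notin // pc_out_in. Qed.

Hypothesis HsR : subsound_t R.

(* In a sub-sound net, a run started with k tokens never completes more than
   k of them: otherwise the k completed tokens plus the surplus would have to
   be removed again, but the output place is never consumed from. *)
Lemma pc_output_bounded k Z :
  reach (pc R) (mscale k (setb [:: pc_in R])) Z -> Z (pc_out R) <= k.
Proof.
move=> H; have HZ := reach_supported flow_within_pc (supported_pc_in (R := R) k) H.
rewrite leqNgt; apply/negP => Hlt.
set rest : marking := fun p => if p == pc_out R then Z p - k else Z p.
have Hrest : supported (pc R) rest.
  move=> p Hp; rewrite /rest; case: eqP => [E|_]; last exact: HZ.
  by move: Hp; rewrite E /= !in_cons eqxx orbT.
have Hsplit : reach (pc R) (mscale k (setb (inp (pc R))))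
                         (madd rest (mscale k (setb (outp (pc R))))).
  apply: reach_ext H (fun _ => erefl) _ => p.
  by rewrite /madd /mscale /rest /= setb1; case: eqP => [->|]; [lia|rewrite muln0 addn0].
have := reach_unconsumed_mono (P := pc R) pc_out_unconsumed (HsR (leqnn k) Hrest Hsplit).
by rewrite /rest eqxx /mscale subnn mul0n; lia.
Qed.

Lemma pc_single_run : reach (pc R) (setb [:: pc_in R]) (setb [:: pc_out R]).
Proof.
have Hinit : supported (pc R) (setb [:: pc_in R]).
  by move=> p; rewrite setb1 /= !in_cons negb_or => /andP [/negbTE -> _].
have Hstart : reach (pc R) (mscale 1 (setb (inp (pc R))))
                           (madd (setb [:: pc_in R]) (mscale 0 (setb (outp (pc R))))).
  by apply: reach_nil => p; rewrite /madd /mscale mul1n mul0n addn0.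
by apply: reach_ext (HsR (leq0n 1) Hinit Hstart) _ _ => p; rewrite /mscale ?mul1n.
Qed.

End CompletedTWF.

(* Bookkeeping identity behind the M-step: with x = projN X p, a (b) the
   multiplicity of p in the preset (postset) of t, s started and z completed
   runs, starting i and completing o further runs keeps Y in sync. *)
Lemma run_accounting x a b s z i o : i * a <= x -> z <= s -> z + o <= s + i ->
  x + (s - z) * b - i * a + i * b = x - i * a + o * b + (s + i - (z + o)) * b.
Proof.
move=> Ha Hz Hzo.
have -> : (s + i - (z + o)) * b = (s - z) * b + i * b - o * b.
  by rewrite -!mulnDl -mulnBl; congr (_ * _); lia.
have : o * b <= (s - z) * b + i * b by rewrite -mulnDl leq_mul2r; apply/orP; right; lia.
by move: ((s - z) * b) (i * b) (o * b) (i * a) Ha => ? ? ? ? ? ?; lia.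
Qed.

Section Substitution.
Variables (N M : wfnet) (t : nat).
Hypothesis HN : is_tWF N.
Hypothesis HM : is_tWF M.
Hypothesis Hdisj : disjoint_nodes N M.
Hypothesis Ht : t \in trans N.

Local Notation S := (subst N t M).

Let netN : is_net N := HN.1.
Let netM : is_net M := HM.1.

Lemma disjointNM x : x \in nodes N -> x \in nodes M -> False.
Proof. by move/Hdisj/negbTE => ->. Qed.

Lemma inp_transN x : x \in inp N -> x \in trans N.
Proof. by case: HN => _ [_ [_ [H _]]] /H. Qed.
Lemma outp_transN x : x \in outp N -> x \in trans N.
Proof. by case: HN => _ [_ [_ [_ [H _]]]] /H. Qed.
Lemma inp_transM x : x \in inp M -> x \in trans M.
Proof. by case: HM => _ [_ [_ [H _]]] /H. Qed.
Lemma outp_transM x : x \in outp M -> x \in trans M.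
Proof. by case: HM => _ [_ [_ [_ [H _]]]] /H. Qed.

Lemma transN_S u : u \in trans N -> u != t -> u \in trans S.
Proof. by move=> Hu Hut; rewrite /= mem_cat mem_filter Hut Hu. Qed.
Lemma transM_S u : u \in trans M -> u \in trans S.
Proof. by move=> Hu; rewrite /= mem_cat Hu orbT. Qed.

Lemma placesN_S p : p \in places N -> p \in nodes S.
Proof. by move=> H; rewrite /nodes /= !mem_cat H. Qed.
Lemma placesM_S p : p \in places M -> p \in nodes S.
Proof. by move=> H; rewrite /nodes /= !mem_cat H orbT. Qed.

Lemma placeN_notM p : p \in places N -> p \notin places M.
Proof. by move=> /places_nodes H; apply/negP => /places_nodes; apply: disjointNM. Qed.

Lemma freshS_notM : pc_in S \notin places M /\ pc_out S \notin places M.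
Proof. by split; apply/negP => /placesM_S /node_fresh; rewrite eqxx => -[]. Qed.

Lemma mem_flow_S x y : ((x, y) \in flow S) =
  [|| [&& (x, y) \in flow N, x != t & y != t], (x, y) \in flow M,
      (x \in preset N t) && (y \in inp M) | (x \in outp M) && (y \in postset N t)].
Proof. by rewrite /subst /= !mem_cat mem_filter !mem_allpairs_pair /= andbC. Qed.

Lemma flowS_preN u p : u \in trans N -> u != t -> ((p, u) \in flow S) = ((p, u) \in flow N).
Proof.
move=> Hu Hut; have HuN := trans_nodes Hu.
rewrite mem_flow_S Hut andbT.
have -> : ((p, u) \in flow M) = false.
  by apply/negbTE/negP => /(flow_tgt_node netM) /(disjointNM HuN).
have -> : (u \in inp M) = false.
  by apply/negbTE/negP => /inp_transM /trans_nodes /(disjointNM HuN).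
have -> : (u \in postset N t) = false.
  apply/negbTE/negP; rewrite mem_postset => /(flow_post_place netN) /(_ Ht).
  by move/(place_not_trans netN); apply.
rewrite !andbF !orbF; case E: ((p, u) \in flow N) => //=.
apply/eqP => Ept; move: E; rewrite Ept => /(flow_pre_place netN) /(_ Hu).
by move/(place_not_trans netN); apply.
Qed.

Lemma flowS_postN u p : u \in trans N -> u != t -> ((u, p) \in flow S) = ((u, p) \in flow N).
Proof.
move=> Hu Hut; have HuN := trans_nodes Hu.
rewrite mem_flow_S Hut.
have -> : ((u, p) \in flow M) = false.
  by apply/negbTE/negP => /(flow_src_node netM) /(disjointNM HuN).
have -> : (u \in outp M) = false.
  by apply/negbTE/negP => /outp_transM /trans_nodes /(disjointNM HuN).
have -> : (u \in preset N t) = false.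
  apply/negbTE/negP; rewrite mem_preset => /(flow_pre_place netN) /(_ Ht).
  by move/(place_not_trans netN); apply.
rewrite /= !orbF; case E: ((u, p) \in flow N) => //=.
apply/eqP => Ept; move: E; rewrite Ept => /(flow_post_place netN) /(_ Hu).
by move/(place_not_trans netN); apply.
Qed.

Lemma flowS_preM u p : u \in trans M ->
  ((p, u) \in flow S) = ((p, u) \in flow M) || (p \in preset N t) && (u \in inp M).
Proof.
move=> /trans_nodes HuM; rewrite mem_flow_S.
have -> : ((p, u) \in flow N) = false.
  by apply/negbTE/negP => /(flow_tgt_node netN) /disjointNM; apply.
have -> : (u \in postset N t) = false.
  by apply/negbTE/negP; rewrite mem_postset => /(flow_tgt_node netN) /disjointNM; apply.
by rewrite andbF orbF.
Qed.

Lemma flowS_postM u p : u \in trans M ->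
  ((u, p) \in flow S) = ((u, p) \in flow M) || (u \in outp M) && (p \in postset N t).
Proof.
move=> /trans_nodes HuM; rewrite mem_flow_S.
have -> : ((u, p) \in flow N) = false.
  by apply/negbTE/negP => /(flow_src_node netN) /disjointNM; apply.
have -> : (u \in preset N t) = false.
  by apply/negbTE/negP; rewrite mem_preset => /(flow_src_node netN) /disjointNM; apply.
by [].
Qed.

Lemma inpS_N u : u \in trans N -> u != t -> (u \in inp S) = (u \in inp N).
Proof.
move=> Hu Hut; rewrite /subst /=; case: ifP => // _.
rewrite mem_cat mem_filter Hut /=.
suff -> : (u \in inp M) = false by rewrite orbF.
by apply/negbTE/negP => /inp_transM /trans_nodes /(disjointNM (trans_nodes Hu)).
Qed.

Lemma outpS_N u : u \in trans N -> u != t -> (u \in outp S) = (u \in outp N).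
Proof.
move=> Hu Hut; rewrite /subst /=; case: ifP => // _.
rewrite mem_cat mem_filter Hut /=.
suff -> : (u \in outp M) = false by rewrite orbF.
by apply/negbTE/negP => /outp_transM /trans_nodes /(disjointNM (trans_nodes Hu)).
Qed.

Lemma inpS_M u : u \in trans M -> (u \in inp S) = (t \in inp N) && (u \in inp M).
Proof.
move=> /trans_nodes Hu.
have HuN : (u \in inp N) = false.
  by apply/negbTE/negP => /inp_transN /trans_nodes /disjointNM; apply.
by rewrite /subst /=; case: ifP => //= _; rewrite mem_cat mem_filter HuN andbF.
Qed.

Lemma outpS_M u : u \in trans M -> (u \in outp S) = (t \in outp N) && (u \in outp M).
Proof.
move=> /trans_nodes Hu.
have HuN : (u \in outp N) = false.
  by apply/negbTE/negP => /outp_transN /trans_nodes /disjointNM; apply.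
by rewrite /subst /=; case: ifP => //= _; rewrite mem_cat mem_filter HuN andbF.
Qed.

Definition embedN (f : marking) : marking := fun p =>
  if p == pc_in S then f (pc_in N) else if p == pc_out S then f (pc_out N)
  else if p \in places N then f p else 0.

Lemma embedN_le f g p : (forall q, f q <= g q) -> embedN f p <= embedN g p.
Proof. by move=> H; rewrite /embedN; case: ifP => _; [|case: ifP => _; [|case: ifP]]. Qed.

Lemma embedN_fire f g h p :
  embedN (fun q => f q - g q + h q) p = embedN f p - embedN g p + embedN h p.
Proof. by rewrite /embedN; case: ifP => _; [|case: ifP => _; [|case: ifP]]. Qed.

Lemma embedN_placeM f p : p \in places M -> embedN f p = 0.
Proof.
move=> Hp; have [HaS HbS] := freshS_notM; rewrite /embedN.
case: eqP => [E|_]; first by move: Hp; rewrite E (negbTE HaS).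
case: eqP => [E|_]; first by move: Hp; rewrite E (negbTE HbS).
by case: ifP => // /placeN_notM; rewrite Hp.
Qed.

Lemma embedN_supported f : supported (pc S) (embedN f).
Proof.
move=> p; rewrite /= !in_cons mem_cat !negb_or => /and3P [/negbTE Ha /negbTE Hb /andP [Hp _]].
by rewrite /embedN Ha Hb (negbTE Hp).
Qed.

Lemma embedN_preb u p : u \in trans N -> embedN (preb (pc N) u) p =
  nat_of_bool (((p, u) \in flow N) || (p == pc_in S) && (u \in inp N)).
Proof.
move=> Hu; have pre_notin x := flow_pre_notin netN (x := x) Hu.
have HS x : x \in places N -> (x == pc_in S) = false /\ (x == pc_out S) = false.
  by move/placesN_S/node_fresh.
rewrite /embedN !preb_pc // (pre_notin (pc_in N)) ?pc_in_notin //.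
rewrite (pre_notin (pc_out N)) ?pc_out_notin // eqxx pc_out_in.
case: (p =P pc_in S) => [->|_].
  by rewrite pre_notin //; apply/negP => /HS []; rewrite eqxx.
case: (p =P pc_out S) => [->|_].
  by rewrite pre_notin //; apply/negP => /HS [_]; rewrite eqxx.
case: ifP => Hp; first by rewrite (node_fresh (places_nodes Hp)).1.
by rewrite pre_notin ?Hp.
Qed.

Lemma embedN_postb u p : u \in trans N -> embedN (postb (pc N) u) p =
  nat_of_bool (((u, p) \in flow N) || (p == pc_out S) && (u \in outp N)).
Proof.
move=> Hu; have post_notin x := flow_post_notin netN (x := x) Hu.
have HS x : x \in places N -> (x == pc_in S) = false /\ (x == pc_out S) = false.
  by move/placesN_S/node_fresh.
rewrite /embedN !postb_pc // (post_notin (pc_in N)) ?pc_in_notin //.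
rewrite (post_notin (pc_out N)) ?pc_out_notin // eqxx pc_in_out.
case: (p =P pc_in S) => [->|_].
  by rewrite post_notin ?pc_in_out //; apply/negP => /HS []; rewrite eqxx.
case: (p =P pc_out S) => [->|_].
  by rewrite post_notin //; apply/negP => /HS [_]; rewrite eqxx.
case: ifP => Hp; first by rewrite (node_fresh (places_nodes Hp)).2.
by rewrite post_notin ?Hp.
Qed.

Lemma preb_S_N u : u \in trans N -> u != t -> preb (pc S) u =1 embedN (preb (pc N) u).
Proof.
by move=> Hu Hut p; rewrite embedN_preb // preb_pc ?transN_S // flowS_preN // inpS_N.
Qed.

Lemma postb_S_N u : u \in trans N -> u != t -> postb (pc S) u =1 embedN (postb (pc N) u).
Proof.
by move=> Hu Hut p; rewrite embedN_postb // postb_pc ?transN_S // flowS_postN // outpS_N.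
Qed.

(* A marking Z of pc(M) inside a context W of S: tokens on the places of M
   are kept, and every token on the input (output) place of pc(M) stands for
   the preset (postset) of t. *)
Definition embedM (W Z : marking) : marking := fun p =>
  if p \in places M then Z p
  else W p + Z (pc_in M) * embedN (preb (pc N) t) p
           + Z (pc_out M) * embedN (postb (pc N) t) p.

Lemma preb_S_M u : u \in trans M -> preb (pc S) u =1 embedM (fun=> 0) (preb (pc M) u).
Proof.
move=> Hu p; rewrite /embedM preb_pc ?transM_S // flowS_preM // inpS_M // mem_preset.
case: ifP => Hp.
  have [/node_fresh [-> _] /node_fresh [HaM _]] := (placesM_S Hp, places_nodes Hp).
  have -> : ((p, t) \in flow N) = false.
    by apply/negbTE/negP => /(flow_src_node netN) /disjointNM; apply; apply: places_nodes.
  by rewrite preb_pc // HaM !orbF.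
rewrite flow_pre_notin ?Hp // !preb_pc_outside ?pc_in_notin ?pc_out_notin // eqxx pc_out_in.
rewrite embedN_preb //; case: (u \in inp M); last by rewrite !andbF.
by rewrite !andbT mul1n mul0n add0n addn0.
Qed.

Lemma postb_S_M u : u \in trans M -> postb (pc S) u =1 embedM (fun=> 0) (postb (pc M) u).
Proof.
move=> Hu p; rewrite /embedM postb_pc ?transM_S // flowS_postM // outpS_M // mem_postset.
case: ifP => Hp.
  have [/node_fresh [_ ->] /node_fresh [_ HbM]] := (placesM_S Hp, places_nodes Hp).
  have -> : ((t, p) \in flow N) = false.
    by apply/negbTE/negP => /(flow_tgt_node netN) /disjointNM; apply; apply: places_nodes.
  by rewrite postb_pc // HbM !andbF !orbF.
rewrite flow_post_notin ?Hp // !postb_pc_outside ?pc_in_notin ?pc_out_notin // eqxx pc_in_out.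
rewrite embedN_postb //; case: (u \in outp M); last by rewrite !andbF.
by rewrite !andbT mul1n mul0n !add0n.
Qed.

Lemma embedM_le W1 W2 Z1 Z2 p : (forall q, W1 q <= W2 q) -> (forall q, Z1 q <= Z2 q) ->
  embedM W1 Z1 p <= embedM W2 Z2 p.
Proof.
move=> HW HZ; rewrite /embedM; case: ifP => // _.
by rewrite leq_add ?leq_mul // leq_add ?leq_mul.
Qed.

Lemma embedM_supported W Z : supported (pc S) W -> supported (pc S) (embedM W Z).
Proof.
move=> HW p Hp; have := Hp; rewrite /= !in_cons mem_cat !negb_or => /and3P [_ _ /andP [_ HpM]].
by rewrite /embedM (negbTE HpM) HW // !embedN_supported // !muln0.
Qed.

Lemma embedM_fire W Z u : enabled (pc M) Z u ->
  fire (pc S) (embedM W Z) u =1 embedM W (fire (pc M) Z u).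
Proof.
move=> [Hu Hen] p; rewrite /fire preb_S_M // postb_S_M // /embedM.
case: ifP => // Hp.
have Hpre_out := pc_out_unconsumed HM Hu.
have Hpost_in : postb (pc M) u (pc_in M) = 0.
  by rewrite postb_pc_outside ?pc_in_notin // pc_in_out.
have Hi := Hen (pc_in M); rewrite Hpre_out Hpost_in in Hen *.
move: (preb (pc M) u _) (postb (pc M) u _) Hi => i o Hi.
move: (embedN (preb (pc N) t) p) (embedN (postb (pc N) t) p) => a b; nia.
Qed.

Lemma liftM W Z1 Z2 : reach (pc M) Z1 Z2 -> reach (pc S) (embedM W Z1) (embedM W Z2).
Proof.
elim=> [Z Z' E|Z u Z' Hen _ IH].
  by apply: reach_nil => p; rewrite /embedM !E.
apply: reach_trans IH; apply: reach_ext (reach_step _) (fun _ => erefl) (embedM_fire W Hen).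
case: Hen => Hu Hen; split; first exact: transM_S.
by move=> p; rewrite preb_S_M //; apply: embedM_le.
Qed.

Hypothesis HsM : subsound_t M.

(* Runs of pc(N) lift to runs of pc(S): every firing of t is simulated by a
   complete run of M carrying one token from its input to its output place. *)
Lemma liftN Y1 Y2 : reach (pc N) Y1 Y2 -> reach (pc S) (embedN Y1) (embedN Y2).
Proof.
elim=> [Y Y' E|Y u Y' [Hu Hen] _ IH].
  by apply: reach_nil => p; rewrite /embedN !E.
case: (u =P t) Hen IH => [->|/eqP Hut] Hen IH; apply: (reach_trans _ IH); last first.
  have HenS : enabled (pc S) (embedN Y) u.
    split; first exact: transN_S.
    by move=> p; rewrite preb_S_N //; apply: embedN_le.
  apply: reach_ext (reach_step HenS) (fun _ => erefl) _ => p.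
  by rewrite /fire preb_S_N // postb_S_N // -embedN_fire.
set W : marking := fun p => embedN Y p - embedN (preb (pc N) t) p.
have Hle p : embedN (preb (pc N) t) p <= embedN Y p by apply: embedN_le.
have [HaM HbM] := (@pc_in_notin M, @pc_out_notin M).
apply: reach_ext (liftM W (pc_single_run HsM)) _ _ => p;
  rewrite /embedM /W !setb1; case: ifP => Hp.
- by rewrite embedN_placeM //; case: eqP => // E; move: Hp; rewrite E (negbTE HaM).
- by rewrite eqxx pc_out_in mul1n mul0n addn0; move: (Hle p); lia.
- by rewrite embedN_placeM //; case: eqP => // E; move: Hp; rewrite E (negbTE HbM).
- by rewrite eqxx pc_in_out mul1n mul0n addn0 /fire embedN_fire.
Qed.

Definition projN (X : marking) : marking := fun p =>
  if p == pc_in N then X (pc_in S) else if p == pc_out N then X (pc_out S)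
  else if p \in places N then X p else 0.

Lemma projN_le X1 X2 p : (forall q, X1 q <= X2 q) -> projN X1 p <= projN X2 p.
Proof. by move=> H; rewrite /projN; case: ifP => _; [|case: ifP => _; [|case: ifP]]. Qed.

Lemma projN_ext X1 X2 : X1 =1 X2 -> projN X1 =1 projN X2.
Proof. by move=> E p; rewrite /projN !E. Qed.

Lemma projN_fire (P : pnet) X u p :
  projN (fire P X u) p = projN X p - projN (preb P u) p + projN (postb P u) p.
Proof. by rewrite /projN; case: ifP => _; [|case: ifP => _; [|case: ifP]]. Qed.

Lemma projN0 : projN (fun=> 0) =1 (fun=> 0).
Proof. by move=> p; rewrite /projN !if_same. Qed.

Lemma projN_supported X : supported (pc N) (projN X).
Proof.
move=> p; rewrite /= !in_cons !negb_or => /andP [/negbTE Ha /andP [/negbTE Hb /negbTE Hp]].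
by rewrite /projN Ha Hb Hp.
Qed.

Lemma projN_embedN f : supported (pc N) f -> projN (embedN f) =1 f.
Proof.
move=> Hf p; rewrite /projN /embedN eqxx pc_out_in eqxx.
case: ifP => [/eqP -> //|Ha]; case: ifP => [/eqP -> //|Hb].
case: ifP => Hp; last by rewrite Hf //= !in_cons Ha Hb Hp.
by have [-> ->] := node_fresh (placesN_S Hp); rewrite Hp.
Qed.

Lemma embedN_projN X : supported (pc S) X -> {in places M, X =1 fun=> 0} ->
  embedN (projN X) =1 X.
Proof.
move=> HX HXM p; rewrite /embedN /projN eqxx pc_out_in eqxx.
case: ifP => [/eqP -> //|Ha]; case: ifP => [/eqP -> //|Hb].
case: ifP => Hp; first by have [-> ->] := node_fresh (places_nodes Hp); rewrite Hp.
case HpM: (p \in places M); first by rewrite HXM.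
by rewrite HX //= !in_cons mem_cat Ha Hb Hp HpM.
Qed.

Lemma projN_embedM W Z : projN (embedM W Z) =1 fun p =>
  projN W p + Z (pc_in M) * preb (pc N) t p + Z (pc_out M) * postb (pc N) t p.
Proof.
have [HaS HbS] := freshS_notM.
have [preN postN] : supported (pc N) (preb (pc N) t) /\ supported (pc N) (postb (pc N) t).
  by split=> p Hp; have [] := flow_within_pc HN Ht Hp.
move=> p; rewrite /projN /embedM (negbTE HaS) (negbTE HbS).
rewrite -[preb _ t p](projN_embedN preN) -[postb _ t p](projN_embedN postN) /projN.
case: ifP => _ //; case: ifP => _ //; case: ifP => Hp; last by rewrite !muln0.
by rewrite (negbTE (placeN_notM Hp)).
Qed.

Lemma projN_add_out W c : projN (madd W (mscale c (setb [:: pc_out S]))) =1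
  madd (projN W) (mscale c (setb [:: pc_out N])).
Proof.
move=> p; rewrite /projN /madd /mscale !setb1 eqxx pc_in_out.
case: eqP => [->|_]; first by rewrite pc_in_out muln0.
case: eqP => [_|_]; first by rewrite muln1.
by case: ifP => [/placesN_S /node_fresh [_ ->]|_]; rewrite muln0.
Qed.

Lemma projN_flowS_N u : u \in trans N -> u != t ->
  projN (preb (pc S) u) =1 preb (pc N) u /\ projN (postb (pc S) u) =1 postb (pc N) u.
Proof.
move=> Hu Hut; have W := flow_within_pc HN Hu; split=> p.
  by rewrite (projN_ext (preb_S_N Hu Hut)) projN_embedN // => q /W [].
by rewrite (projN_ext (postb_S_N Hu Hut)) projN_embedN // => q /W [].
Qed.

Lemma projN_flowS_M u : u \in trans M ->
  projN (preb (pc S) u) =1 (fun p => (u \in inp M) * preb (pc N) t p) /\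
  projN (postb (pc S) u) =1 (fun p => (u \in outp M) * postb (pc N) t p).
Proof.
move=> Hu; split=> p.
  rewrite (projN_ext (preb_S_M Hu)) projN_embedM projN0 pc_out_unconsumed //.
  by rewrite preb_pc_outside ?pc_in_notin // eqxx mul0n addn0.
rewrite (projN_ext (postb_S_M Hu)) projN_embedM projN0.
by rewrite postb_pc_outside ?pc_in_notin // pc_in_out postb_pc_outside ?pc_out_notin // eqxx.
Qed.

(* A marking X of pc(S), reached from k input tokens, decomposes into a
   marking Y of pc(N) reached from k input tokens and a marking Z of pc(M)
   reached by starting s runs of M: each started run counts in Y as a firing
   of t, Z agrees with X on the places of M, and the runs not yet completed
   (s minus the tokens on the output place of pc(M)) still owe the postset
   of t to X. *)
Definition decomposes (k : nat) (X : marking) : Prop := exists Y s Z,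
  [/\ reach (pc N) (mscale k (setb [:: pc_in N])) Y,
      reach (pc M) (mscale s (setb [:: pc_in M])) Z,
      Z (pc_in M) = 0,
      {in places M, Z =1 X} &
      Y =1 fun p => projN X p + (s - Z (pc_out M)) * postb (pc N) t p].

Lemma decomposes_ext k X1 X2 : X1 =1 X2 -> decomposes k X1 -> decomposes k X2.
Proof.
move=> E [Y [s [Z [HY HZ HZa HZX HYX]]]]; exists Y, s, Z; split=> // [p Hp|p].
  by rewrite -E HZX.
by rewrite HYX (projN_ext E).
Qed.

Lemma decomposes_init k : decomposes k (mscale k (setb [:: pc_in S])).
Proof.
exists (mscale k (setb [:: pc_in N])), 0, (fun=> 0); split => //.
- exact: reach_nil.
- by apply: reach_nil => p; rewrite /mscale mul0n.
- move=> p Hp; rewrite /mscale setb1.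
  by case: eqP Hp => [->|_]; [rewrite (negbTE freshS_notM.1)|rewrite muln0].
- move=> p; rewrite sub0n mul0n addn0 /projN /mscale !setb1 eqxx pc_out_in.
  case: eqP => // _; case: eqP => [_|_]; first by rewrite muln0.
  by case: ifP => [/placesN_S /node_fresh [-> _]|_]; rewrite muln0.
Qed.

Lemma decomposes_stepN k X u : u \in trans N -> u != t ->
  enabled (pc S) X u -> decomposes k X -> decomposes k (fire (pc S) X u).
Proof.
move=> Hu Hut [_ Hen] [Y [s [Z [HY HZ HZa HZX HYX]]]].
have [Hpre Hpost] := projN_flowS_N Hu Hut.
have Hle q : preb (pc N) u q <= projN X q by rewrite -Hpre; apply: projN_le.
exists (fire (pc N) Y u), s, Z; split => //.
- apply: (reach_trans HY); apply: reach_step; split=> // q.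
  by rewrite HYX; apply: leq_trans (Hle q) (leq_addr _ _).
- move=> p Hp; rewrite /fire preb_S_N // postb_S_N // !embedN_placeM //.
  by rewrite subn0 addn0 HZX.
- move=> p; rewrite projN_fire Hpre Hpost /fire HYX.
  by move: (Hle p) ((s - Z (pc_out M)) * postb (pc N) t p) => H K; lia.
Qed.

(* Firing a transition u of M: fire u in Z, after starting a new run of M
   (and firing t in Y) if u is an input transition of M. *)
Lemma decomposes_stepM k X u : u \in trans M ->
  enabled (pc S) X u -> decomposes k X -> decomposes k (fire (pc S) X u).
Proof.
move=> Hu [_ Hen] [Y [s [Z [HY HZ HZa HZX HYX]]]].
set i := (u \in inp M); set o := (u \in outp M).
have [Hpre Hpost] := projN_flowS_M Hu.
have Hle q : i * preb (pc N) t q <= projN X q by rewrite -Hpre; apply: projN_le.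
have HaM := @pc_in_notin M.
set Z0 := madd Z (mscale i (setb [:: pc_in M])).
have HenM : enabled (pc M) Z0 u.
  split=> // q; rewrite /Z0 /madd /mscale setb1; case Hq: (q \in places M).
    move: (Hen q); rewrite preb_S_M // /embedM Hq -HZX // => H.
    exact: leq_trans H (leq_addr _ _).
  rewrite preb_pc_outside ?Hq //; apply: leq_trans (leq_addl _ _).
  by case: (q == pc_in M); rewrite ?muln1 ?muln0.
set Z' := fire (pc M) Z0 u.
have HZ' : reach (pc M) (mscale (s + i) (setb [:: pc_in M])) Z'.
  apply: reach_trans (reach_step HenM).
  apply: reach_ext (reach_madd (mscale i (setb [:: pc_in M])) HZ) _ (fun _ => erefl).
  by move=> q; rewrite /madd /mscale mulnDl.
have HZ'in : Z' (pc_in M) = 0.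
  rewrite /Z' /fire /Z0 /madd /mscale setb1 eqxx preb_pc_outside //.
  by rewrite postb_pc_outside // pc_in_out eqxx HZa muln1 /= subnn.
have HZ'out : Z' (pc_out M) = Z (pc_out M) + o.
  rewrite /Z' /fire /Z0 /madd /mscale setb1 pc_out_in muln0 addn0 pc_out_unconsumed //.
  by rewrite postb_pc_outside ?pc_out_notin // eqxx subn0.
set Y' := if i then fire (pc N) Y t else Y.
have HY' : reach (pc N) (mscale k (setb [:: pc_in N])) Y'.
  rewrite /Y'; case Hi: i => //; apply: (reach_trans HY); apply: reach_step; split=> // q.
  by move: (Hle q); rewrite Hi mul1n HYX => H; apply: leq_trans H (leq_addr _ _).
exists Y', (s + i), Z'; split => // [p Hp|p].
  rewrite /Z' /fire /Z0 /madd /mscale setb1 preb_S_M // postb_S_M // /embedM Hp HZX //.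
  by case: eqP Hp => [->|_]; [rewrite (negbTE HaM)|rewrite muln0 addn0].
have -> : Y' p = Y p - i * preb (pc N) t p + i * postb (pc N) t p.
  by rewrite /Y'; case: (i); rewrite /fire ?mul1n ?mul0n ?subn0 ?addn0.
rewrite projN_fire Hpre Hpost HZ'out HYX (@run_accounting _ _ _ _ _ _ o) //.
  exact: (pc_output_bounded HM HsM HZ).
by rewrite -HZ'out; exact: (pc_output_bounded HM HsM HZ').
Qed.

Lemma decomposes_reach k X : reach (pc S) (mscale k (setb [:: pc_in S])) X -> decomposes k X.
Proof.
move=> H; have := decomposes_init k.
elim: H => [X0 X1 E|X0 u X1 Hen _ IH] HX0; first exact: decomposes_ext E HX0.
apply: IH; have := Hen.1; rewrite /= mem_cat mem_filter => /orP [/andP [Hut HuN]|HuM].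
  exact: decomposes_stepN.
exact: decomposes_stepM.
Qed.

Lemma complete_runs m' s Z : reach (pc M) (mscale s (setb [:: pc_in M])) Z ->
  Z (pc_in M) = 0 -> {in places M, Z =1 m'} ->
  reach (pc S) m' (embedM m' (mscale (s - Z (pc_out M)) (setb [:: pc_out M]))).
Proof.
move=> HZ HZa HZm.
have HZs := reach_supported (flow_within_pc HM) (supported_pc_in (R := M) s) HZ.
set Z0 : marking := fun p => if p == pc_out M then 0 else Z p.
have HZ0s : supported (pc M) Z0 by move=> p Hp; rewrite /Z0; case: ifP => // _; apply: HZs.
have HZ0 : reach (pc M) (mscale s (setb (inp (pc M))))
             (madd Z0 (mscale (Z (pc_out M)) (setb (outp (pc M))))).
  apply: reach_ext HZ (fun _ => erefl) _ => p.
  by rewrite /madd /Z0 /mscale /= setb1; case: eqP => [->|_]; rewrite ?muln1 ?muln0 ?addn0.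
apply: reach_ext (liftM m' (HsM (pc_output_bounded HM HsM HZ) HZ0s HZ0)) _ (fun _ => erefl).
move=> p; rewrite /embedM /Z0; case: ifP => Hp.
  by case: eqP Hp => [->|_ Hp]; [rewrite (negbTE (@pc_out_notin M))|rewrite HZm].
by rewrite pc_in_out eqxx HZa !mul0n !addn0.
Qed.

Hypothesis HsN : subsound_t N.

(* If the N-view of a marking X of S, plus k' completed tokens, is reachable
   in pc(N) from k tokens, then X can be completed in S: finish in N by
   sub-soundness of N and lift the run to S. *)
Lemma complete_N k k' X Y : k' <= k ->
  reach (pc N) (mscale k (setb [:: pc_in N])) Y ->
  Y =1 madd (projN X) (mscale k' (setb [:: pc_out N])) ->
  supported (pc S) X -> {in places M, X =1 fun=> 0} ->
  reach (pc S) X (mscale (k - k') (setb [:: pc_out S])).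
Proof.
move=> Hk HY HYX HX HXM; set j := Y (pc_out N).
have Hj : j <= k := pc_output_bounded HN HsN HY.
have Hk'j : k' <= j by rewrite /j HYX /madd /mscale setb1 eqxx muln1 leq_addl.
set m2 : marking := fun p => if p == pc_out N then 0 else projN X p.
have Hm2 : supported (pc N) m2.
  by move=> p Hp; rewrite /m2; case: ifP => // _; apply: projN_supported.
have HY2 : reach (pc N) (mscale k (setb (inp (pc N))))
             (madd m2 (mscale j (setb (outp (pc N))))).
  apply: reach_ext HY (fun _ => erefl) _ => p.
  rewrite /madd /m2 /mscale /= setb1; case: eqP => [->|/eqP Hp]; first by rewrite muln1.
  by rewrite HYX /madd /mscale setb1 (negbTE Hp) !muln0.
apply: reach_ext (reach_madd (mscale (j - k') (setb [:: pc_out S])) (liftN (HsN Hj Hm2 HY2))) _ _.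
all: move=> p; rewrite /madd /mscale setb1.
- rewrite -(embedN_projN HX HXM) /embedN /m2.
  case: (p =P pc_in S) => [->|_]; first by rewrite !pc_in_out /= muln0 addn0.
  case: (p =P pc_out S) => [_|_]; first by rewrite eqxx muln1 /j HYX /madd /mscale setb1 eqxx; lia.
  case: ifP => Hp; last by rewrite muln0.
  by rewrite (node_fresh (places_nodes Hp)).2 muln0 addn0.
- rewrite /embedN /mscale !setb1.
  case: (p =P pc_in S) => [->|_]; first by rewrite !pc_in_out /= !muln0.
  case: (p =P pc_out S) => [_|_]; first by rewrite eqxx !muln1; lia.
  by case: ifP => [/places_nodes /node_fresh [_ ->]|_]; rewrite !muln0.
Qed.

Lemma subst_subsound : subsound_t S.
Proof.
move=> k k' m' Hk Hm H.
have [Y [s [Z [HY HZ HZa HZX HYX]]]] := decomposes_reach H.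
have HZm : {in places M, Z =1 m'}.
  move=> p Hp; rewrite HZX // /madd /mscale /= setb1.
  by case: eqP Hp => [->|_ _]; [rewrite (negbTE freshS_notM.2)|rewrite muln0 addn0].
apply: (reach_trans (complete_runs HZ HZa HZm)); apply: complete_N Hk HY _ _ _.
- move=> p; rewrite HYX projN_add_out /madd projN_embedM /mscale !setb1.
  by rewrite pc_in_out eqxx muln0 mul0n muln1 addn0; lia.
- exact: embedM_supported.
- move=> p Hp; rewrite /embedM Hp /mscale setb1.
  by case: eqP Hp => [->|_ _]; [rewrite (negbTE (@pc_out_notin M))|rewrite muln0].
Qed.

End Substitution.

Theorem mainTheorem14 (N M : wfnet) (t : nat) :
  is_tWF N -> subsound_t N ->
  is_tWF M -> subsound_t M ->
  disjoint_nodes N M ->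
  t \in trans N ->
  subsound_t (subst N t M).
Proof.
move=> HN HsN HM HsM Hdisj Ht.
exact: subst_subsound HN HM Hdisj Ht HsM HsN.
Qed.
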